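(* Let $N\ge3$ and suppose $k_m\ge1$ for all $0\le m\le r-1$. Then a function $f$ on $\mathcal{V}_{N,{\bf k}}$ satisfies $L_{N,{\bf k}}f=Nf$ if and only if $Pf=\frac{1}{N-1}f$; that is, the eigenspace of the graph Laplacian $L_{N,{\bf k}}$ for the eigenvalue $N$ coincides with the eigenspace of $P$ for the eigenvalue $1/(N-1)$.
   Context: Fix $N\ge3$, $r\ge2$, distinct reals $e_0,\dots,e_{r-1}$, and ${\bf k}=(k_0,\dots,k_{r-1})$ of nonnegative integers with $\sum_m k_m=N$. The multislice $\mathcal{V}_{N,{\bf k}}$ is the set of $x\in\{e_0,\dots,e_{r-1}\}^N$ with exactly $k_m$ coordinates equal to $e_m$ for each $m$, and $\mu_{N,{\bf k}}$ is the uniform probability measure on it. For $i<j$, $\pi_{i,j}x$ swaps coordinates $i$ and $j$. The graph Laplacian is $L_{N,{\bf k}}f(x)=\sum_{y}(f(x)-f(y))$, the sum over all $y\neq x$ of the form $y=\pi_{i,j}x$. For $1\le\ell\le N$, $P_\ell$ is the orthogonal projection in $L^2(\mu_{N,{\bf k}})$ onto functions depending only on $x_\ell$ (i.e. $P_\ell f(x)$ is the average of $f(y)$ over $y\in\mathcal{V}_{N,{\bf k}}$ with $y_\ell=x_\ell$), and $P=\frac1N\sum_{\ell=1}^N P_\ell$. *)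

From mathcomp Require Import all_boot all_order all_algebra all_fingroup.
From mathcomp Require Import perm.
Set Implicit Arguments. Unset Strict Implicit. Unset Printing Implicit Defensive.
Import Order.TTheory GRing.Theory Num.Theory.
Local Open Scope ring_scope.

Section Multislice.
Variables (R : realFieldType) (N r : nat) (e : 'I_r -> R) (k : 'I_r -> nat).

Definition ms_pattern (c : {ffun 'I_N -> 'I_r}) : bool :=
  [forall m : 'I_r, #|[set i : 'I_N | c i == m]| == k m].

Definition multislice : seq 'rV[R]_N :=
  undup [seq \row_(i < N) e (c i) | c : {ffun 'I_N -> 'I_r} <- enum ms_pattern].

Definition swap_coords (i j : 'I_N) (x : 'rV[R]_N) : 'rV[R]_N :=
  \row_(t < N) x 0 (tperm i j t).

Definition ms_laplacian (f : 'rV[R]_N -> R) (x : 'rV[R]_N) : R :=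
  \sum_(y <- multislice | (y != x) &&
        [exists i : 'I_N, exists j : 'I_N, (i < j)%N && (y == swap_coords i j x)])
     (f x - f y).

Definition ms_proj (l : 'I_N) (f : 'rV[R]_N -> R) (x : 'rV[R]_N) : R :=
  (\sum_(y <- multislice | y 0 l == x 0 l) f y) /
  (count (fun y : 'rV[R]_N => y 0 l == x 0 l) multislice)%:R.

Definition ms_P (f : 'rV[R]_N -> R) (x : 'rV[R]_N) : R :=
  N%:R^-1 * \sum_(l < N) ms_proj l f x.

End Multislice.

From mathcomp Require Import all_boot all_order all_algebra all_fingroup.
From mathcomp Require Import perm ring lra zify.
Import Order.TTheory GRing.Theory Num.Theory.
Local Open Scope ring_scope.
Set Implicit Arguments. Unset Strict Implicit. Unset Printing Implicit Defensive.

(* Functions on the multislice are read as functions [g] of colourings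
   [c : 'I_N -> 'I_r] in the orbit of a fixed colouring under permutations of
   the positions.  The key estimate is the spectral gap [<g, L g> >= n ||g||^2]
   for centred [g] on an orbit of [n] positions.  It is proved by induction on
   [n], conditioning on the colour at one position [l]: averaging the fibrewise
   gaps over [l] gives [(n-1) (n ||g||^2 - sum_l ||P_l g||^2) <= (n-2) <g, L g>],
   while exchangeability of the positions gives
   [(n-1) sum_l ||P_l g||^2 <= n ||g||^2], with equality only if
   [(n-1) sum_l P_l g = n g].
   An eigenfunction of [L] for [N] is centred and attains the gap, so equality
   holds, i.e. [P f = f / (N-1)].  Conversely, if [P f = f / (N-1)] then [f] is
   centred; each [P_l f] depends on one coordinate only and its values summed
   over all positions vanish, which makes it an eigenfunction of [L] for [N],
   and hence so is [f = (N-1)/N sum_l P_l f]. *)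

Section Colourings.
Variables (R : realFieldType) (N r : nat).
Local Notation col := {ffun 'I_N -> 'I_r}.

Definition cswap (i j : 'I_N) (c : col) : col := [ffun t => c (tperm i j t)].

(* The orbit of [c0] under the permutations of the positions in [A],
   described by its invariants: the colours outside [A] and the colour counts
   inside [A]. *)
Definition in_orbit (A : {set 'I_N}) (c0 c : col) : bool :=
  [forall i, (i \notin A) ==> (c i == c0 i)] &&
  [forall m, #|[set i in A | c i == m]| == #|[set i in A | c0 i == m]|].

Lemma cswapK (i j : 'I_N) : involutive (cswap i j).
Proof. by move=> c; apply/ffunP => t; rewrite !ffunE tpermK. Qed.

Lemma cswapC (i j : 'I_N) (c : col) : cswap i j c = cswap j i c.
Proof. by apply/ffunP => t; rewrite !ffunE tpermC. Qed.

Lemma in_orbit_refl (A : {set 'I_N}) (c0 : col) : in_orbit A c0 c0.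
Proof.
by apply/andP; split; [apply/forallP => i; apply/implyP | apply/forallP => m].
Qed.

Lemma in_orbit_cswap (A : {set 'I_N}) (c0 c : col) (i j : 'I_N) :
  i \in A -> j \in A -> in_orbit A c0 (cswap i j c) = in_orbit A c0 c.
Proof.
move=> iA jA.
have swapW d : in_orbit A c0 d -> in_orbit A c0 (cswap i j d).
  case/andP => /forallP out /forallP cnt; apply/andP; split.
    apply/forallP => t; apply/implyP => tA; rewrite ffunE tpermD.
    - exact: (implyP (out t)).
    - by apply: contraNneq tA => <-.
    - by apply: contraNneq tA => <-.
  apply/forallP => m; rewrite -(eqP (cnt m)).
  have -> : [set t in A | cswap i j d t == m] =
            tperm i j @^-1: [set t in A | d t == m].
    apply/setP => t; rewrite !inE ffunE; congr (_ && _).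
    by case: (tpermP i j t) => [->|->|/eqP ? /eqP ?]; rewrite ?iA ?jA.
  by rewrite card_preimset //; exact: perm_inj.
by apply/idP/idP => [/swapW|]; rewrite ?cswapK //; apply: swapW.
Qed.

Lemma sum_orbit_cswap (A : {set 'I_N}) (c0 : col) (i j : 'I_N) (F : col -> R) :
  i \in A -> j \in A ->
  \sum_(c | in_orbit A c0 c) F c = \sum_(c | in_orbit A c0 c) F (cswap i j c).
Proof.
move=> iA jA; rewrite (reindex_inj (can_inj (cswapK i j))) /=.
by apply: eq_bigl => c; rewrite in_orbit_cswap.
Qed.

Lemma in_orbit_rebase (A : {set 'I_N}) (c0 c c' : col) :
  in_orbit A c0 c -> in_orbit A c c' = in_orbit A c0 c'.
Proof.
case/andP => /forallP H1 /forallP H2.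
apply/idP/idP => /andP[/forallP G1 /forallP G2]; apply/andP; split; apply/forallP.
- move=> t; apply/implyP => tA; rewrite (eqP (implyP (G1 t) tA)).
  exact: (implyP (H1 t)).
- by move=> m; rewrite (eqP (G2 m)).
- move=> t; apply/implyP => tA; rewrite (eqP (implyP (G1 t) tA)).
  by rewrite (eqP (implyP (H1 t) tA)).
- by move=> m; rewrite (eqP (G2 m)) (eqP (H2 m)).
Qed.

Lemma orbit_sum_colours (A : {set 'I_N}) (c0 c : col) (F : 'I_r -> R) :
  in_orbit A c0 c -> \sum_(j in A) F (c j) = \sum_(j in A) F (c0 j).
Proof.
have E (d : col) : \sum_(j in A) F (d j) =
    \sum_m F m * #|[set i in A | d i == m]|%:R.
  rewrite (partition_big d predT) //=; apply: eq_bigr => m _.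
  rewrite (eq_bigr (fun _ => F m)); last by move=> j /andP[_ /eqP ->].
  rewrite sumr_const mulr_natr; congr (_ *+ _).
  by apply: eq_card => j; rewrite inE.
case/andP => _ /forallP cnt; rewrite !E; apply: eq_bigr => m _.
by rewrite (eqP (cnt m)).
Qed.

Lemma cards_inD1 (A : {set 'I_N}) (l : 'I_N) (P : pred 'I_N) : l \in A ->
  #|[set i in A | P i]| = (P l + #|[set i in A :\ l | P i]|)%N.
Proof.
move=> lA; rewrite (cardsD1 l) inE lA /=; congr (_ + _)%N.
by apply: eq_card => i; rewrite !inE andbA.
Qed.

Lemma in_orbitD1 (A : {set 'I_N}) (c0 c1 c : col) (l : 'I_N) :
  l \in A -> in_orbit A c0 c1 ->
  (in_orbit A c0 c && (c l == c1 l)) = in_orbit (A :\ l) c1 c.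
Proof.
move=> lA H1; rewrite -(in_orbit_rebase c H1); apply/idP/idP.
  case/andP => /andP[/forallP G1 /forallP G2] /eqP El.
  apply/andP; split; apply/forallP.
    move=> t; apply/implyP; rewrite !inE negb_and negbK.
    case/orP => [/eqP -> | tA]; first by rewrite El.
    exact: (implyP (G1 t)).
  move=> m; move/eqP: (G2 m); rewrite !(cards_inD1 _ lA) El => /eqP.
  by rewrite eqn_add2l.
case/andP => /forallP G1 /forallP G2.
have El : c l = c1 l by apply/eqP; apply: (implyP (G1 l)); rewrite !inE eqxx.
rewrite El eqxx andbT; apply/andP; split; apply/forallP.
  move=> t; apply/implyP => tA; apply: (implyP (G1 t)).
  by rewrite !inE (negbTE tA) andbF.
by move=> m; rewrite !(cards_inD1 _ lA) El (eqP (G2 m)).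
Qed.

(* [fibre_mean A c0 g l] is the conditional expectation [P_l g] on the orbit,
   as a function of the colour at position [l]. *)
Definition fibre_mean (A : {set 'I_N}) (c0 : col) (g : col -> R) (l : 'I_N)
    (a : 'I_r) : R :=
  (\sum_(c | in_orbit A c0 c && (c l == a)) g c) /
  #|[set c | in_orbit A c0 c && (c l == a)]|%:R.

Lemma sumr_mean (P : pred col) (g : col -> R) :
  \sum_(c | P c) g c =
  \sum_(c | P c) ((\sum_(c | P c) g c) / #|[set c | P c]|%:R).
Proof.
rewrite sumr_const.
have [/eqP|Pn0] := eqVneq #|[set c | P c]| 0%N.
  rewrite cards_eq0 => /eqP/setP P0.
  by rewrite big_pred0 ?mul0r ?mul0rn // => c; have := P0 c; rewrite !inE.
have -> : #|[pred c | P c]| = #|[set c | P c]| by apply: eq_card => c; rewrite inE.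
by rewrite -[_ *+ _]mulr_natr mulfVK // pnatr_eq0.
Qed.

Lemma orbit_sum_fibre_mean (A : {set 'I_N}) (c0 : col) (g : col -> R) (l : 'I_N)
    (F : 'I_r -> R) :
  \sum_(c | in_orbit A c0 c) g c * F (c l) =
  \sum_(c | in_orbit A c0 c) fibre_mean A c0 g l (c l) * F (c l).
Proof.
rewrite (partition_big (fun c : col => c l) predT) //=.
rewrite [RHS](partition_big (fun c : col => c l) predT) //=.
apply: eq_bigr => a _.
rewrite (eq_bigr (fun c => g c * F a)); last by move=> c /andP[_ /eqP ->].
rewrite [RHS](eq_bigr (fun c => fibre_mean A c0 g l a * F a));
  last by move=> c /andP[_ /eqP ->].
by rewrite -[LHS]mulr_suml -[RHS]mulr_suml; congr (_ * _); exact: sumr_mean.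
Qed.

Lemma orbit_sum_fibre_mean1 (A : {set 'I_N}) (c0 : col) (g : col -> R) (l : 'I_N) :
  \sum_(c | in_orbit A c0 c) g c =
  \sum_(c | in_orbit A c0 c) fibre_mean A c0 g l (c l).
Proof.
have := orbit_sum_fibre_mean A c0 g l (fun _ => 1).
by under eq_bigr do rewrite mulr1; under [in X in _ = X -> _]eq_bigr do rewrite mulr1.
Qed.

Lemma fibre_mean_centred (A : {set 'I_N}) (c0 : col) (g : col -> R) (l : 'I_N)
    (a : 'I_r) :
  \sum_(c | in_orbit A c0 c && (c l == a)) (g c - fibre_mean A c0 g l a) = 0.
Proof. by rewrite sumrB {1}sumr_mean subrr. Qed.

Lemma fibre_variance (A : {set 'I_N}) (c0 : col) (g : col -> R) (l : 'I_N) :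
  \sum_(c | in_orbit A c0 c) (g c - fibre_mean A c0 g l (c l)) ^+ 2 =
  \sum_(c | in_orbit A c0 c) g c ^+ 2 -
  \sum_(c | in_orbit A c0 c) fibre_mean A c0 g l (c l) ^+ 2.
Proof.
have E := orbit_sum_fibre_mean A c0 g l (fibre_mean A c0 g l).
transitivity (\sum_(c | in_orbit A c0 c) g c ^+ 2
   - 2 * \sum_(c | in_orbit A c0 c) g c * fibre_mean A c0 g l (c l)
   + \sum_(c | in_orbit A c0 c) fibre_mean A c0 g l (c l) ^+ 2).
  by rewrite mulr_sumr -sumrB -big_split; apply: eq_bigr => c _ /=; ring.
rewrite E.
under [\sum_(c | _) (_ * _)]eq_bigr do rewrite -expr2.
ring.
Qed.

End Colourings.

Section Projections.
Variables (R : realFieldType) (N r : nat).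
Variables (A : {set 'I_N}) (c0 : {ffun 'I_N -> 'I_r}) (g : {ffun 'I_N -> 'I_r} -> R).
Variable n : nat.
Hypothesis cardA : #|A| = n.
Hypothesis n_ge2 : (2 <= n)%N.
Hypothesis g_centred : \sum_(c | in_orbit A c0 c) g c = 0.

Local Notation col := {ffun 'I_N -> 'I_r}.
Local Notation P l c := (fibre_mean A c0 g l (c l)).

Lemma orbit_sum_position (l l' : 'I_N) (G : 'I_r -> R) : l \in A -> l' \in A ->
  \sum_(c | in_orbit A c0 c) G (c l) = \sum_(c | in_orbit A c0 c) G (c l').
Proof.
move=> lA l'A; rewrite (sum_orbit_cswap _ _ lA l'A).
by apply: eq_bigr => c _; rewrite ffunE tpermL.
Qed.

Lemma fibre_mean_sum_positions (l : 'I_N) : l \in A ->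
  \sum_(j in A) fibre_mean A c0 g l (c0 j) = 0.
Proof.
move=> lA.
have orbit_gt0 : (0 < #|[pred c | in_orbit A c0 c]|)%N.
  by apply/card_gt0P; exists c0; rewrite inE in_orbit_refl.
have E : \sum_(c | in_orbit A c0 c) \sum_(j in A) fibre_mean A c0 g l (c j) =
    (\sum_(j in A) fibre_mean A c0 g l (c0 j)) *+ #|[pred c | in_orbit A c0 c]|.
  by rewrite -sumr_const; apply: eq_bigr => c Hc; rewrite (orbit_sum_colours _ Hc).
have E0 : \sum_(c | in_orbit A c0 c) \sum_(j in A) fibre_mean A c0 g l (c j) = 0.
  rewrite exchange_big /=; apply: big1 => j jA.
  by rewrite -(orbit_sum_position _ lA jA) -orbit_sum_fibre_mean1.
move/eqP: E; rewrite E0 eq_sym mulrn_eq0 => /orP[/eqP|/eqP //].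
by move: orbit_gt0 => /[swap] ->.
Qed.

Lemma fibre_mean_cross (l j : 'I_N) : l \in A -> j \in A -> l != j ->
  (n.-1)%:R * \sum_(c | in_orbit A c0 c) P l c * P j c =
  - \sum_(c | in_orbit A c0 c) P l c * fibre_mean A c0 g j (c l).
Proof.
move=> lA jA ljn.
have E1 : \sum_(c | in_orbit A c0 c)
      P l c * \sum_(j' in A | j' != l) fibre_mean A c0 g j (c j')
    = - \sum_(c | in_orbit A c0 c) P l c * fibre_mean A c0 g j (c l).
  rewrite -sumrN; apply: eq_bigr => c Hc.
  have := orbit_sum_colours (fibre_mean A c0 g j) Hc.
  rewrite fibre_mean_sum_positions // (bigD1 l) //=.
  by move=> /eqP; rewrite addrC addr_eq0 => /eqP ->; rewrite mulrN.
rewrite -E1; under [RHS]eq_bigr do rewrite mulr_sumr.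
rewrite [RHS]exchange_big /=.
rewrite [RHS](eq_bigr (fun _ => \sum_(c | in_orbit A c0 c) P l c * P j c)).
  rewrite sumr_const mulr_natl; congr (_ *+ _).
  have := cardsD1 l A; rewrite lA cardA add1n => ->.
  by apply: eq_card => x; rewrite !inE andbC.
move=> j' /andP[j'A j'l]; rewrite (sum_orbit_cswap _ _ jA j'A).
by apply: eq_bigr => c _; rewrite !ffunE tpermR tpermD // eq_sym.
Qed.

Definition proj_sum (c : col) : R := \sum_(l in A) P l c.
Definition proj_energy : R := \sum_(l in A) \sum_(c | in_orbit A c0 c) P l c ^+ 2.

Lemma proj_sum_inner : \sum_(c | in_orbit A c0 c) proj_sum c * g c = proj_energy.
Proof.
rewrite /proj_sum /proj_energy; under eq_bigr do rewrite mulr_suml.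
rewrite exchange_big /=; apply: eq_bigr => l _.
under eq_bigr do rewrite mulrC.
by rewrite orbit_sum_fibre_mean; apply: eq_bigr => c _; rewrite expr2.
Qed.

Lemma cross_sum_ge0 :
  0 <= \sum_(l in A) \sum_(j in A) \sum_(c | in_orbit A c0 c)
         P l c * fibre_mean A c0 g j (c l).
Proof.
have [l0 l0A] : exists l0, l0 \in A.
  by apply/card_gt0P; rewrite cardA; exact: leq_trans n_ge2.
pose Psi a := \sum_(j in A) fibre_mean A c0 g j a.
rewrite (eq_bigr (fun l => \sum_(c | in_orbit A c0 c)
                     fibre_mean A c0 g l (c l0) * Psi (c l0))).
  rewrite exchange_big /=; apply: sumr_ge0 => c _.
  by rewrite -mulr_suml -expr2 sqr_ge0.
move=> l lA; rewrite exchange_big /=.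
under eq_bigr do rewrite -mulr_sumr.
exact: (orbit_sum_position (fun a => fibre_mean A c0 g l a * Psi a) lA l0A).
Qed.

Lemma proj_sum_sq_le :
  (n.-1)%:R * \sum_(c | in_orbit A c0 c) proj_sum c ^+ 2 <= n%:R * proj_energy.
Proof.
pose Z := \sum_(l in A) \sum_(j in A) \sum_(c | in_orbit A c0 c)
            P l c * fibre_mean A c0 g j (c l).
have sq_expand : \sum_(c | in_orbit A c0 c) proj_sum c ^+ 2 =
    \sum_(l in A) \sum_(j in A) \sum_(c | in_orbit A c0 c) P l c * P j c.
  rewrite (eq_bigr (fun c : col => \sum_(l in A) \sum_(j in A) P l c * P j c));
    last first.
    move=> c _; rewrite expr2 /proj_sum mulr_suml.
    by apply: eq_bigr => l _; rewrite mulr_sumr.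
  rewrite exchange_big; apply: eq_bigr => l _ /=; by rewrite exchange_big.
have n_succ : n%:R = (n.-1)%:R + 1 :> R.
  by rewrite -{1}(prednK (ltnW n_ge2)) -natr1.
have row_l l : l \in A ->
    (n.-1)%:R * \sum_(j in A) \sum_(c | in_orbit A c0 c) P l c * P j c =
    n%:R * \sum_(c | in_orbit A c0 c) P l c ^+ 2 -
    \sum_(j in A) \sum_(c | in_orbit A c0 c) P l c * fibre_mean A c0 g j (c l).
  move=> lA; rewrite (bigD1 l) //= [in RHS](bigD1 l) //= mulrDr.
  have -> : (n.-1)%:R * \sum_(j in A | j != l)
               \sum_(c | in_orbit A c0 c) P l c * P j c =
      - \sum_(j in A | j != l)
          \sum_(c | in_orbit A c0 c) P l c * fibre_mean A c0 g j (c l).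
    rewrite mulr_sumr -sumrN; apply: eq_bigr => j /andP[jA jl].
    by rewrite fibre_mean_cross // eq_sym.
  under [\sum_(c | _) _ ^+ 2]eq_bigr do rewrite expr2.
  by rewrite n_succ mulrDl mul1r opprD addrA addrK.
have -> : (n.-1)%:R * \sum_(c | in_orbit A c0 c) proj_sum c ^+ 2 =
    n%:R * proj_energy - Z.
  by rewrite sq_expand mulr_sumr (eq_bigr _ row_l) sumrB /proj_energy mulr_sumr.
by rewrite lerBlDr lerDl; exact: cross_sum_ge0.
Qed.

Lemma proj_defect_sq_le :
  \sum_(c | in_orbit A c0 c) ((n.-1)%:R * proj_sum c - n%:R * g c) ^+ 2 <=
  n%:R * (n%:R * \sum_(c | in_orbit A c0 c) g c ^+ 2 - (n.-1)%:R * proj_energy).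
Proof.
set H := \sum_(c | in_orbit A c0 c) proj_sum c ^+ 2.
set G := \sum_(c | in_orbit A c0 c) g c ^+ 2.
have -> : \sum_(c | in_orbit A c0 c) ((n.-1)%:R * proj_sum c - n%:R * g c) ^+ 2 =
    (n.-1)%:R * ((n.-1)%:R * H)
    - (2 * n%:R * (n.-1)%:R) * \sum_(c | in_orbit A c0 c) proj_sum c * g c
    + n%:R ^+ 2 * G.
  rewrite !mulr_sumr -sumrB -big_split; apply: eq_bigr => c _ /=; ring.
rewrite proj_sum_inner.
have := proj_sum_sq_le; rewrite -/H => hH.
have : (n.-1)%:R * ((n.-1)%:R * H) <= (n.-1)%:R * (n%:R * proj_energy).
  by apply: ler_wpM2l.
nra.
Qed.

Lemma proj_energy_le :
  (n.-1)%:R * proj_energy <= n%:R * \sum_(c | in_orbit A c0 c) g c ^+ 2.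
Proof.
have := le_trans (sumr_ge0 _ (fun c _ => sqr_ge0 _)) proj_defect_sq_le.
by rewrite pmulr_rge0 ?subr_ge0 // ltr0n; exact: leq_trans n_ge2.
Qed.

Lemma proj_energy_eq :
  n%:R * \sum_(c | in_orbit A c0 c) g c ^+ 2 <= (n.-1)%:R * proj_energy ->
  forall c, in_orbit A c0 c -> (n.-1)%:R * proj_sum c = n%:R * g c.
Proof.
move=> H c Hc.
have : \sum_(c | in_orbit A c0 c) ((n.-1)%:R * proj_sum c - n%:R * g c) ^+ 2 <= 0.
  apply: (le_trans proj_defect_sq_le); rewrite pmulr_rle0 ?subr_le0 //.
  by rewrite ltr0n; exact: leq_trans n_ge2.
rewrite le_eqVlt ltNge sumr_ge0 ?orbF => [/eqP/psumr_eq0P sum0|c' _]; last first.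
  exact: sqr_ge0.
by apply/eqP; rewrite -subr_eq0 -sqrf_eq0 sum0 // => c' _; apply: sqr_ge0.
Qed.

End Projections.

Section SpectralGap.
Variables (R : realFieldType) (N r : nat).
Local Notation col := {ffun 'I_N -> 'I_r}.

(* [4 <g, L g>], summed over ordered pairs of positions. *)
Definition dirichlet (A : {set 'I_N}) (c0 : col) (g : col -> R) : R :=
  \sum_(c | in_orbit A c0 c) \sum_(i in A) \sum_(j in A | j != i)
     (g c - g (cswap i j c)) ^+ 2.

Definition spectral_gap (n : nat) : Prop :=
  forall (A : {set 'I_N}) (c0 : col) (g : col -> R),
  #|A| = n -> \sum_(c | in_orbit A c0 c) g c = 0 ->
  4 * n%:R * \sum_(c | in_orbit A c0 c) g c ^+ 2 <= dirichlet A c0 g.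

Lemma eq_multiset2 (T : eqType) (a b a' b' : T) :
  (forall m, ((a' == m) + (b' == m) = (a == m) + (b == m))%N) ->
  (a' = a /\ b' = b) \/ (a' = b /\ b' = a).
Proof.
move=> H; case: (a' =P a) => [Ea|na].
  left; split=> //; move: (H b'); rewrite Ea eqxx.
  by case: (b =P b') => // _; case: (a == b'); lia.
right; move: (H a); rewrite eqxx (introF eqP na) /=.
case: (b' =P a) => [Eb|]; last by case: (b == a); lia.
move=> _; move: (H a'); rewrite eqxx Eb eq_sym (introF eqP na) /=.
by case: (b =P a') => [->|]; [split | case: (a == a'); lia].
Qed.

Lemma in_orbit2 (i j : 'I_N) (c c' : col) : i != j ->
  in_orbit [set i; j] c c' -> c' = c \/ c' = cswap i j c.
Proof.
move=> ij /andP[/forallP out /forallP cnt].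
have iA : i \in [set i; j] by rewrite !inE eqxx.
have jA : j \in [set i; j] :\ i by rewrite !inE eqxx orbT andbT eq_sym.
have cnt2 (d : col) m : #|[set t in [set i; j] | d t == m]| =
                        ((d i == m) + (d j == m))%N.
  rewrite (cards_inD1 _ iA) (cards_inD1 _ jA) addnA -[RHS]addn0; congr (_ + _)%N.
  apply/eqP; rewrite cards_eq0; apply/eqP/setP => t; rewrite !inE.
  by case: (t =P j); case: (t =P i).
have same_out t : t != i -> t != j -> c' t = c t.
  move=> ti tj; apply/eqP; apply: (implyP (out t)).
  by rewrite !inE negb_or ti tj.
have Hm m : ((c' i == m) + (c' j == m) = (c i == m) + (c j == m))%N.
  by have := eqP (cnt m); rewrite !cnt2.
case: (eq_multiset2 Hm) => [[E1 E2]|[E1 E2]]; [left|right]; apply/ffunP => t;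
  rewrite ?ffunE; case: (t =P i) => [->|/eqP ti];
  rewrite ?tpermL ?E1 //; case: (t =P j) => [->|/eqP tj]; rewrite ?tpermR ?E2 //;
  rewrite ?tpermD 1?eq_sym //; exact: same_out.
Qed.

Lemma spectral_gap2 : spectral_gap 2.
Proof.
move=> A c0 g /eqP/cards2P [i [j [ij ->]]] g_centred.
have pair_orbit c : in_orbit [set i; j] c0 c -> g (cswap i j c) = - g c.
  move=> Hc.
  have orbitE c' : in_orbit [set i; j] c0 c' = (c' == c) || (c' == cswap i j c).
    rewrite -(in_orbit_rebase c' Hc); apply/idP/idP.
      by case/(in_orbit2 ij) => ->; rewrite eqxx ?orbT.
    case/orP => /eqP ->; first exact: in_orbit_refl.
    by rewrite in_orbit_cswap ?in_orbit_refl // !inE eqxx ?orbT.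
  move: g_centred; rewrite (eq_bigl _ _ orbitE).
  have [E|ne] := eqVneq (cswap i j c) c.
    rewrite (eq_bigl (pred1 c)); last by move=> c'; rewrite /= E orbb.
    by rewrite big_pred1_eq E => ->; rewrite oppr0.
  rewrite (bigD1 c) ?eqxx //= (bigD1 (cswap i j c)) /=; last by rewrite eqxx orbT ne.
  rewrite big1 ?addr0; last first.
    by move=> x /andP[/andP[/orP[] /eqP -> /negP]]; rewrite eqxx.
  by move/eqP; rewrite addr_eq0 => /eqP ->; rewrite opprK.
have other (s : 'I_N) (F : 'I_N -> R) : s = i \/ s = j ->
    \sum_(t in [set i; j] | t != s) F t = F (if s == i then j else i).
  move=> Hs; apply: big_pred1 => t; rewrite !inE /=.
  case: Hs => ->; rewrite ?eqxx /=.
    have [->|ti] := eqVneq t i; first by rewrite /= (negbTE ij).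
    by rewrite /= andbT.
  rewrite [j == i]eq_sym (negbTE ij).
  have [->|tj] := eqVneq t j; first by rewrite /= andbF eq_sym (negbTE ij).
  by rewrite /= orbF andbT.
rewrite /dirichlet mulr_sumr le_eqVlt; apply/orP; left; apply/eqP.
apply: eq_bigr => c Hc; rewrite big_setU1 ?inE // big_set1 !other ?eqxx; auto.
by rewrite [j == i]eq_sym (negbTE ij) (cswapC j i) pair_orbit //=; ring.
Qed.

Lemma sum_pairs_avoiding (A : {set 'I_N}) (F : 'I_N -> 'I_N -> R) :
  \sum_(l in A) \sum_(i in A :\ l) \sum_(j in A :\ l | j != i) F i j =
  \sum_(i in A) \sum_(j in A | j != i) F i j *+ #|A :\ i :\ j|.
Proof.
transitivity (\sum_(l in A) \sum_i \sum_j
    (if (i \in A :\ l) && ((j \in A :\ l) && (j != i)) then F i j else 0)).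
  apply: eq_bigr => l _; rewrite big_mkcond; apply: eq_bigr => i _.
  by case: (i \in A :\ l) => /=; [rewrite big_mkcond | rewrite big1].
rewrite exchange_big /= (bigID [in A]) /= [X in _ + X]big1 ?addr0; last first.
  move=> i iA; apply: big1 => l lA; apply: big1 => j _.
  by rewrite !inE (negbTE iA) /= andbF.
apply: eq_bigr => i iA /=.
rewrite exchange_big /= (bigID (fun j => (j \in A) && (j != i))) /=.
rewrite [X in _ + X]big1 ?addr0; last first.
  move=> j jc; apply: big1 => l lA; rewrite !inE iA.
  by move: jc; case: (j \in A); case: (j != i); case: (i != l); case: (j != l).
apply: eq_bigr => j /andP[jA ji].
rewrite -big_mkcondr /= sumr_const; congr (_ *+ _); apply: eq_card => l.
rewrite unfold_in /= !inE iA jA ji /= !andbT [i == l]eq_sym [j == l]eq_sym.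
by case: (l \in A); case: (l != i); case: (l != j).
Qed.

(* Conditioning on the colour at [l] splits the orbit into orbits on [A :\ l],
   to each of which the spectral gap for [n.-1] positions applies. *)
Lemma dirichlet_fibre (n : nat) (A : {set 'I_N}) (c0 : col) (g : col -> R)
    (l : 'I_N) :
  spectral_gap n.-1 -> #|A| = n -> l \in A ->
  4 * (n.-1)%:R *
    \sum_(c | in_orbit A c0 c) (g c - fibre_mean A c0 g l (c l)) ^+ 2 <=
  \sum_(c | in_orbit A c0 c) \sum_(i in A :\ l) \sum_(j in A :\ l | j != i)
     (g c - g (cswap i j c)) ^+ 2.
Proof.
move=> gap cardA lA.
have cardAl : #|A :\ l| = n.-1 by move: (cardsD1 l A); rewrite lA cardA => ->.
rewrite (partition_big (fun c : col => c l) predT) //=.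
rewrite [X in _ <= X](partition_big (fun c : col => c l) predT) //=.
rewrite mulr_sumr; apply: ler_sum => a _.
case: (pickP (fun c : col => in_orbit A c0 c && (c l == a))) => [c1 | fibre0];
  last by rewrite !big_pred0 ?mulr0.
case/andP => Hc1 /eqP <-.
have fibreE c := in_orbitD1 c lA Hc1.
rewrite !(eq_bigl _ _ fibreE).
pose g' c := g c - fibre_mean A c0 g l (c1 l).
have g'_centred : \sum_(c | in_orbit (A :\ l) c1 c) g' c = 0.
  by rewrite -(eq_bigl _ _ fibreE) fibre_mean_centred.
have := gap _ _ _ cardAl g'_centred; rewrite /dirichlet.
have -> : \sum_(c | in_orbit (A :\ l) c1 c) g' c ^+ 2 =
          \sum_(c | in_orbit (A :\ l) c1 c) (g c - fibre_mean A c0 g l (c l)) ^+ 2.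
  by apply: eq_bigr => c; rewrite -fibreE => /andP[_ /eqP ->].
move/le_trans; apply; rewrite le_eqVlt; apply/orP; left; apply/eqP.
apply: eq_bigr => c _; apply: eq_bigr => i _; apply: eq_bigr => j _.
by rewrite /g'; congr (_ ^+ 2); ring.
Qed.

Lemma dirichlet_proj_bound (n : nat) (A : {set 'I_N}) (c0 : col) (g : col -> R) :
  spectral_gap n.-1 -> #|A| = n ->
  4 * (n.-1)%:R * (n%:R * \sum_(c | in_orbit A c0 c) g c ^+ 2 - proj_energy A c0 g)
  <= (n.-2)%:R * dirichlet A c0 g.
Proof.
move=> gap cardA.
have -> : (n.-2)%:R * dirichlet A c0 g =
    \sum_(l in A) \sum_(c | in_orbit A c0 c) \sum_(i in A :\ l)
      \sum_(j in A :\ l | j != i) (g c - g (cswap i j c)) ^+ 2.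
  rewrite exchange_big /dirichlet mulr_sumr; apply: eq_bigr => c _ /=.
  rewrite sum_pairs_avoiding mulr_sumr; apply: eq_bigr => i iA; rewrite mulr_sumr.
  apply: eq_bigr => j /andP[jA ji]; rewrite mulr_natl; congr (_ *+ _).
  move: (cardsD1 i A) (cardsD1 j (A :\ i)); rewrite iA cardA !inE ji jA => -> /=.
  by move=> ->; rewrite !add1n.
have -> : 4 * (n.-1)%:R *
    (n%:R * \sum_(c | in_orbit A c0 c) g c ^+ 2 - proj_energy A c0 g) =
    \sum_(l in A) 4 * (n.-1)%:R * (\sum_(c | in_orbit A c0 c) g c ^+ 2 -
      \sum_(c | in_orbit A c0 c) fibre_mean A c0 g l (c l) ^+ 2).
  rewrite -mulr_sumr sumrB sumr_const /proj_energy; congr (_ * (_ - _)).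
  by rewrite cardA mulr_natl.
apply: ler_sum => l lA; rewrite -fibre_variance.
exact: dirichlet_fibre gap cardA lA.
Qed.

(* With [proj_energy_le], [dirichlet_proj_bound] yields
   [4 n (n-2) ||g||^2 <= (n-2) (dirichlet g)]. *)
Lemma spectral_gapP (n : nat) : (2 <= n)%N -> spectral_gap n.
Proof.
elim: n => [//|n IH] n_ge2.
have [n_lt2|n_ge2'] := ltnP n 2.
  have -> : n.+1 = 2%N by lia.
  exact: spectral_gap2.
move=> A c0 g cardA g_centred.
have := dirichlet_proj_bound (n := n.+1) c0 g (IH n_ge2') cardA.
have := proj_energy_le cardA n_ge2 g_centred.
rewrite /=.
set G := \sum_(c | in_orbit A c0 c) g c ^+ 2.
set Q := dirichlet A c0 g; set s := proj_energy A c0 g.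
have e1 : (n.-1)%:R = n%:R - 1 :> R.
  by rewrite -[in RHS](@prednK n) -?natr1 ?addrK //; lia.
rewrite e1 -natr1 => s_le bound.
have n_ge2R : 2%:R <= n%:R :> R by rewrite ler_nat.
have key : (n%:R - 1) * (4 * (n%:R + 1) * G) <= (n%:R - 1) * Q.
  by apply: le_trans bound; nra.
by rewrite ler_pM2l in key; lra.
Qed.

End SpectralGap.

Section Laplacian.
Variables (R : realFieldType) (N r : nat).
Local Notation col := {ffun 'I_N -> 'I_r}.

(* Twice the Laplacian, transported to colourings: ordered pairs of positions
   are summed over, so each transposition is counted twice. *)
Definition lap_col (g : col -> R) (c : col) : R :=
  \sum_i \sum_(j | j != i) (g c - g (cswap i j c)).

Lemma lap_col_sum (I : finType) (A : {set I}) (G : I -> col -> R) (c : col) :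
  lap_col (fun d => \sum_(l in A) G l d) c = \sum_(l in A) lap_col (G l) c.
Proof.
rewrite /lap_col; under eq_bigr do under eq_bigr do rewrite -sumrB.
under eq_bigr do rewrite exchange_big /=.
by rewrite exchange_big.
Qed.

Lemma lap_col_position (F : 'I_r -> R) (l : 'I_N) (c : col) :
  lap_col (fun d => F (d l)) c = 2 * (N%:R * F (c l) - \sum_j F (c j)).
Proof.
have row_l : \sum_(j | j != l) (F (c l) - F (c j)) = N%:R * F (c l) - \sum_j F (c j).
  have -> : \sum_(j | j != l) (F (c l) - F (c j)) = \sum_j (F (c l) - F (c j)).
    by rewrite [RHS](bigD1 l) //= subrr add0r.
  by rewrite sumrB sumr_const card_ord mulr_natl.
rewrite /lap_col (bigD1 l) //=.
under eq_bigr do rewrite ffunE tpermL.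
rewrite [X in _ + X](eq_bigr (fun i => F (c l) - F (c i))); last first.
  move=> i il; rewrite (bigD1 l) 1?eq_sym //= !ffunE tpermR big1 ?addr0 //.
  by move=> j /andP[ji jl]; rewrite !ffunE tpermD ?subrr // eq_sym.
by rewrite !row_l mulr2n mulrDl mul1r.
Qed.

Lemma sum_lap_col (c0 : col) (g : col -> R) :
  \sum_(c | in_orbit setT c0 c) lap_col g c = 0.
Proof.
rewrite /lap_col exchange_big /=; apply: big1 => i _.
rewrite exchange_big /=; apply: big1 => j _.
by rewrite sumrB -(sum_orbit_cswap _ _ (in_setT i) (in_setT j)) subrr.
Qed.

Lemma dirichlet_lap_col (c0 : col) (g : col -> R) :
  dirichlet setT c0 g = 2 * \sum_(c | in_orbit setT c0 c) g c * lap_col g c.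
Proof.
have setT_pairs c : \sum_(i in [set: 'I_N]) \sum_(j in [set: 'I_N] | j != i)
      (g c - g (cswap i j c)) ^+ 2 =
    \sum_i \sum_(j | j != i) (g c - g (cswap i j c)) ^+ 2.
  rewrite (eq_bigl predT) => [|i]; last by rewrite in_setT.
  by apply: eq_bigr => i _; apply: eq_bigl => j; rewrite in_setT.
rewrite /dirichlet /lap_col mulr_sumr (eq_bigr _ (fun c _ => setT_pairs c)).
rewrite [RHS](eq_bigr (fun c => \sum_i \sum_(j | j != i)
           2 * (g c * (g c - g (cswap i j c))))); last first.
  by move=> c _; rewrite !mulr_sumr; apply: eq_bigr => i _; rewrite !mulr_sumr.
rewrite exchange_big [RHS]exchange_big; apply: eq_bigr => i _ /=.
rewrite exchange_big [RHS]exchange_big; apply: eq_bigr => j _ /=.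
rewrite (eq_bigr (fun c => g c * (g c - g (cswap i j c)) +
     g (cswap i j c) * (g (cswap i j c) - g c))); last by move=> c _; ring.
rewrite big_split /= [X in _ + X](sum_orbit_cswap _ _ (in_setT i) (in_setT j)) /=.
by rewrite -big_split /=; apply: eq_bigr => c _; rewrite cswapK; ring.
Qed.

Lemma sum_proj_sum (c0 : col) (g : col -> R) :
  \sum_(c | in_orbit setT c0 c) proj_sum setT c0 g c =
  N%:R * \sum_(c | in_orbit setT c0 c) g c.
Proof.
rewrite /proj_sum exchange_big /=.
rewrite (eq_bigr (fun _ => \sum_(c | in_orbit setT c0 c) g c)).
  by rewrite sumr_const mulr_natl cardsT card_ord.
by move=> l _; rewrite -orbit_sum_fibre_mean1.
Qed.

(* Each [P_l g] depends on one coordinate only; for centred [g] the sum of its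
   values over all positions vanishes, so [lap_col_position] makes it an
   eigenfunction. *)
Lemma lap_col_proj_sum (c0 : col) (g : col -> R) :
  \sum_(c | in_orbit setT c0 c) g c = 0 ->
  lap_col (proj_sum setT c0 g) c0 = 2 * N%:R * proj_sum setT c0 g c0.
Proof.
move=> g_centred.
rewrite (lap_col_sum _ (fun l d => fibre_mean setT c0 g l (d l))) /proj_sum.
rewrite mulr_sumr; apply: eq_bigr => l _; rewrite lap_col_position.
have := fibre_mean_sum_positions g_centred (in_setT l).
rewrite (eq_bigl predT) => [->|j]; last by rewrite in_setT.
by rewrite subr0 mulrA.
Qed.

Lemma lap_eigen_centred (c0 : col) (g : col -> R) : (0 < N)%N ->
  (forall c, in_orbit setT c0 c -> lap_col g c = 2 * N%:R * g c) ->
  \sum_(c | in_orbit setT c0 c) g c = 0.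
Proof.
move=> N_gt0 eigen; have := sum_lap_col c0 g.
rewrite (eq_bigr _ eigen) -mulr_sumr => /eqP; rewrite mulf_eq0 => /orP[|/eqP //].
by rewrite -natrM pnatr_eq0 muln_eq0 /= eqn0Ngt N_gt0.
Qed.

(* An eigenfunction for [N] attains the spectral gap, which by
   [dirichlet_proj_bound] forces equality in [proj_energy_le]. *)
Lemma lap_eigen_proj (c0 : col) (g : col -> R) : (3 <= N)%N ->
  (forall c, in_orbit setT c0 c -> lap_col g c = 2 * N%:R * g c) ->
  forall c, in_orbit setT c0 c -> (N.-1)%:R * proj_sum setT c0 g c = N%:R * g c.
Proof.
move=> N_ge3 eigen.
have cardT : #|[set: 'I_N]| = N by rewrite cardsT card_ord.
have g_centred := lap_eigen_centred (ltnW (ltnW N_ge3)) eigen.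
apply: (proj_energy_eq cardT (ltnW N_ge3) g_centred).
have gap : spectral_gap R N r N.-1 by apply: spectral_gapP; lia.
have := dirichlet_proj_bound c0 g gap cardT.
rewrite dirichlet_lap_col (eq_bigr _ (fun c Hc => congr1 (fun x => g c * x)
                                                  (eigen c Hc))).
set G := \sum_(c | in_orbit setT c0 c) g c ^+ 2.
have -> : 2 * \sum_(c | in_orbit setT c0 c) g c * (2 * N%:R * g c) = 4 * N%:R * G.
  by rewrite mulr_sumr /G mulr_sumr; apply: eq_bigr => c _; ring.
have e1 : (N.-1)%:R = N%:R - 1 :> R.
  by rewrite -[in RHS](@prednK N) -?natr1 ?addrK //; lia.
have e2 : (N.-2)%:R = N%:R - 2 :> R.
  have -> : N = (N.-2).+2 by lia.
  by rewrite -[in RHS]natr1 -[in RHS]natr1 /=; ring.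
rewrite e1 e2 => bound.
set s := proj_energy _ _ _ in bound *.
nra.
Qed.

Lemma proj_eigen_lap (c0 : col) (g : col -> R) : (3 <= N)%N ->
  (forall c, in_orbit setT c0 c -> N%:R * g c = (N.-1)%:R * proj_sum setT c0 g c) ->
  lap_col g c0 = 2 * N%:R * g c0.
Proof.
move=> N_ge3 fixed.
have N_neq0 : N%:R != 0 :> R by rewrite pnatr_eq0; lia.
have g_centred : \sum_(c | in_orbit setT c0 c) g c = 0.
  have : N%:R * \sum_(c | in_orbit setT c0 c) g c =
         (N.-1)%:R * (N%:R * \sum_(c | in_orbit setT c0 c) g c).
    by rewrite -[in RHS]sum_proj_sum !mulr_sumr; apply: eq_bigr => c; exact: fixed.
  move/eqP; rewrite -subr_eq0 -{1}[N%:R * _]mul1r -mulrBl mulf_eq0 => /orP[|].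
    by rewrite subr_eq0 eq_sym pnatr_eq1 => /eqP; lia.
  by rewrite mulf_eq0 (negbTE N_neq0) => /eqP.
apply: (mulfI N_neq0).
have -> : N%:R * lap_col g c0 = (N.-1)%:R * lap_col (proj_sum setT c0 g) c0.
  rewrite /lap_col !mulr_sumr; apply: eq_bigr => i _; rewrite !mulr_sumr.
  apply: eq_bigr => j _; rewrite !mulrBr !fixed ?in_orbit_refl //.
  by rewrite in_orbit_cswap ?in_setT ?in_orbit_refl.
by rewrite lap_col_proj_sum // mulrCA -fixed ?in_orbit_refl // mulrCA.
Qed.

End Laplacian.

Section Multislice.
Variables (R : realFieldType) (N r : nat) (e : 'I_r -> R) (k : 'I_r -> nat).
Hypothesis e_inj : injective e.
Local Notation col := {ffun 'I_N -> 'I_r}.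

Definition row_of_col (c : col) : 'rV[R]_N := \row_(i < N) e (c i).

Lemma row_of_col_inj : injective row_of_col.
Proof.
move=> c c' /matrixP E; apply/ffunP => i; apply: e_inj.
by have := E 0 i; rewrite !mxE.
Qed.

Lemma multisliceE : multislice N e k = [seq row_of_col c | c <- enum (ms_pattern k)].
Proof. by rewrite /multislice undup_id // map_inj_uniq ?enum_uniq //; exact: row_of_col_inj. Qed.

Lemma multisliceP x :
  x \in multislice N e k -> exists c, ms_pattern k c /\ x = row_of_col c.
Proof. by rewrite multisliceE => /mapP[c]; rewrite mem_enum => Hc ->; exists c. Qed.

Lemma row_of_col_mem c : ms_pattern k c -> row_of_col c \in multislice N e k.
Proof. by move=> Hc; rewrite multisliceE; apply: map_f; rewrite mem_enum. Qed.

Lemma big_multislice (P : pred 'rV[R]_N) (F : 'rV[R]_N -> R) :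
  \sum_(y <- multislice N e k | P y) F y =
  \sum_(c | ms_pattern k c && P (row_of_col c)) F (row_of_col c).
Proof. by rewrite multisliceE big_map big_enum_cond. Qed.

Lemma count_multislice (P : pred 'rV[R]_N) :
  count P (multislice N e k) = #|[set c | ms_pattern k c && P (row_of_col c)]|.
Proof.
rewrite multisliceE -sum1_count big_map big_enum_cond sum1_card cardsE.
by apply: eq_card => c; rewrite unfold_in.
Qed.

Lemma in_orbit_setT (c0 c : col) :
  ms_pattern k c0 -> in_orbit setT c0 c = ms_pattern k c.
Proof.
move=> /forallP H0; rewrite /in_orbit /ms_pattern.
have -> : [forall i, (i \notin [set: 'I_N]) ==> (c i == c0 i)].
  by apply/forallP => i; rewrite in_setT.
apply: eq_forallb => m; rewrite -(eqP (H0 m)).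
have E (d : col) : #|[set i in [set: 'I_N] | d i == m]| = #|[set i | d i == m]|.
  by apply: eq_card => i; rewrite !inE.
by rewrite !E.
Qed.

Lemma swap_coords_row (i j : 'I_N) (c : col) :
  swap_coords i j (row_of_col c) = row_of_col (cswap i j c).
Proof. by apply/matrixP => a t; rewrite !mxE ffunE. Qed.

Lemma ms_pattern_cswap (i j : 'I_N) (c : col) :
  ms_pattern k c -> ms_pattern k (cswap i j c).
Proof.
by move=> Hc; rewrite -(in_orbit_setT _ Hc) in_orbit_cswap ?in_setT ?in_orbit_refl.
Qed.

Lemma cswap_id (i j : 'I_N) (c : col) : c i = c j -> cswap i j c = c.
Proof.
move=> E; apply/ffunP => t; rewrite ffunE.
by case: tpermP => [->|->|] //; rewrite E.
Qed.

Lemma cswap_moved (i j t : 'I_N) (c : col) :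
  cswap i j c t != c t -> (t == i) || (t == j).
Proof. by rewrite ffunE; case: tpermP => [->|->|]; rewrite ?eqxx ?orbT. Qed.

Lemma cswap_pair_inj (c : col) :
  {in [set p : 'I_N * 'I_N | (p.1 < p.2)%N && (cswap p.1 p.2 c != c)] &,
    injective (fun p : 'I_N * 'I_N => cswap p.1 p.2 c)}.
Proof.
move=> [i j] [i' j']; rewrite !inE /= => /andP[ij ne] /andP[ij' _] E.
have cij : c i != c j by apply: contraNneq ne => /cswap_id ->.
have h1 : (i == i') || (i == j').
  by apply: (@cswap_moved i' j' i c); rewrite -E ffunE tpermL eq_sym.
have h2 : (j == i') || (j == j').
  by apply: (@cswap_moved i' j' j c); rewrite -E ffunE tpermR.
case/orP: h1 => /eqP Ei; case/orP: h2 => /eqP Ej; subst => //.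
- by rewrite eqxx in cij.
- lia.
- by rewrite eqxx in cij.
Qed.

Lemma sum_ordered_pairs (H : 'I_N -> 'I_N -> R) : (forall i j, H i j = H j i) ->
  \sum_i \sum_(j | j != i) H i j = 2 * \sum_(i : 'I_N) \sum_(j : 'I_N | (i < j)%N) H i j.
Proof.
move=> Hsym.
have split_ij (i : 'I_N) : \sum_(j | j != i) H i j =
    \sum_(j : 'I_N | (i < j)%N) H i j + \sum_(j : 'I_N | (j < i)%N) H i j.
  rewrite (bigID (fun j : 'I_N => (i < j)%N)) /=; congr (_ + _); apply: eq_bigl => j.
    by rewrite neq_ltn; case: (i < j)%N; rewrite ?orbT ?andbT ?andbF //= ltnNge ltnW.
  by rewrite neq_ltn; case: ltngtP.
rewrite (eq_bigr _ (fun i _ => split_ij i)) big_split /=.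
rewrite [X in _ + X](exchange_big_dep (fun _ => true)) //=.
rewrite [X in _ + X](eq_bigr (fun j : 'I_N => \sum_(i : 'I_N | (j < i)%N) H j i)).
  by rewrite -mulr2n mulr_natl.
by move=> j _; apply: eq_bigr => i _; rewrite Hsym.
Qed.

Lemma ms_laplacian_row (f : 'rV[R]_N -> R) (c : col) : ms_pattern k c ->
  2 * ms_laplacian e k f (row_of_col c) = lap_col (fun d => f (row_of_col d)) c.
Proof.
move=> Hc; rewrite /ms_laplacian big_multislice.
set D := [set p : 'I_N * 'I_N | (p.1 < p.2)%N && (cswap p.1 p.2 c != c)].
rewrite (eq_bigl [in [set cswap p.1 p.2 c | p in D]]); last first.
  move=> c'; rewrite (inj_eq row_of_col_inj); apply/idP/idP.
    case/andP => Hc' /andP[ne /existsP[i /existsP[j /andP[ij /eqP E]]]].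
    move: E; rewrite swap_coords_row => /row_of_col_inj E.
    by apply/imsetP; exists (i, j) => //; rewrite inE /= ij -E ne.
  case/imsetP => [[i j]]; rewrite inE /= => /andP[ij ne] ->.
  rewrite ms_pattern_cswap // ne /=; apply/existsP; exists i; apply/existsP; exists j.
  by rewrite ij swap_coords_row eqxx.
rewrite big_imset /=; last exact: cswap_pair_inj.
rewrite /lap_col (sum_ordered_pairs
  (H := fun i j => f (row_of_col c) - f (row_of_col (cswap i j c)))); last first.
  by move=> i j; rewrite cswapC.
congr (_ * _); rewrite pair_big_dep /=.
rewrite [RHS](bigID (fun p : 'I_N * 'I_N => cswap p.1 p.2 c != c)) /=.
rewrite [X in _ = _ + X]big1 ?addr0; last first.
  by move=> p /andP[_]; rewrite negbK => /eqP ->; rewrite subrr.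
by apply: eq_bigl => p; rewrite inE.
Qed.

Lemma ms_proj_row (f : 'rV[R]_N -> R) (l : 'I_N) (c0 c : col) :
  ms_pattern k c0 -> ms_pattern k c ->
  ms_proj e k l f (row_of_col c) =
  fibre_mean setT c0 (fun d => f (row_of_col d)) l (c l).
Proof.
move=> H0 Hc; rewrite /ms_proj /fibre_mean big_multislice count_multislice.
have E (d : col) :
    ms_pattern k d && ((row_of_col d) 0 l == (row_of_col c) 0 l) =
    in_orbit setT c0 d && (d l == c l).
  by rewrite !mxE (inj_eq e_inj) (in_orbit_setT _ H0).
rewrite (eq_bigl _ _ E); congr (_ / _%:R); apply: eq_card => d; by rewrite !inE E.
Qed.

Lemma ms_laplacian_eigenE (f : 'rV[R]_N -> R) (c : col) : ms_pattern k c ->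
  (ms_laplacian e k f (row_of_col c) = N%:R * f (row_of_col c)) <->
  (lap_col (fun d => f (row_of_col d)) c = 2 * N%:R * f (row_of_col c)).
Proof.
move=> Hc; rewrite -ms_laplacian_row // -mulrA.
by split=> [-> //|]; apply: mulfI; rewrite pnatr_eq0.
Qed.

Lemma ms_P_eigenE (f : 'rV[R]_N -> R) (c0 c : col) : (1 < N)%N ->
  ms_pattern k c0 -> ms_pattern k c ->
  (ms_P e k f (row_of_col c) = (N%:R - 1)^-1 * f (row_of_col c)) <->
  ((N.-1)%:R * proj_sum setT c0 (fun d => f (row_of_col d)) c =
   N%:R * f (row_of_col c)).
Proof.
move=> N_gt1 H0 Hc.
have -> : ms_P e k f (row_of_col c) =
          N%:R^-1 * proj_sum setT c0 (fun d => f (row_of_col d)) c.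
  rewrite /ms_P /proj_sum [in RHS](eq_bigl predT) => [|l]; last by rewrite in_setT.
  by congr (_ * _); apply: eq_bigr => l _; rewrite (ms_proj_row _ _ H0 Hc).
have e1 : (N.-1)%:R = N%:R - 1 :> R.
  by rewrite -[in RHS](@prednK N) -?natr1 ?addrK //; lia.
have N_neq0 : N%:R != 0 :> R by rewrite pnatr_eq0; lia.
have N1_neq0 : N%:R - 1 != 0 :> R by rewrite -e1 pnatr_eq0; lia.
rewrite e1; set p := proj_sum _ _ _ c; set y := f _; split => E.
  have -> : p = N%:R * ((N%:R - 1)^-1 * y) by rewrite -E mulVKf.
  by rewrite mulrCA mulVKf.
have -> : y = N%:R^-1 * ((N%:R - 1) * p) by rewrite E mulKf.
by rewrite mulrCA mulKf.
Qed.

End Multislice.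

Unset Implicit Arguments.

Theorem mainTheorem8 (R : realFieldType) (N r : nat) (e : 'I_r -> R)
    (k : 'I_r -> nat)
    (hN : (3 <= N)%N) (hr : (2 <= r)%N) (he : injective e)
    (hk : (\sum_(m < r) k m)%N = N) (hk1 : forall m : 'I_r, (1 <= k m)%N)
    (f : 'rV[R]_N -> R) :
  (forall x, x \in multislice N e k ->
     ms_laplacian e k f x = N%:R * f x) <->
  (forall x, x \in multislice N e k ->
     ms_P e k f x = (N%:R - 1)^-1 * f x).
Proof.
have N_gt1 : (1 < N)%N by lia.
split=> eigen _ /(multisliceP he) [c0 [Hc0 ->]].
- apply/(ms_P_eigenE he f N_gt1 Hc0 Hc0).
  apply: (lap_eigen_proj hN _ (in_orbit_refl _ _)) => c.
  rewrite (in_orbit_setT _ Hc0) => Hc.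
  by apply/(ms_laplacian_eigenE he f Hc)/eigen/row_of_col_mem.
- apply/(ms_laplacian_eigenE he f Hc0)/(proj_eigen_lap hN) => c.
  rewrite (in_orbit_setT _ Hc0) => Hc.
  by apply/esym/(ms_P_eigenE he f N_gt1 Hc0 Hc)/eigen/row_of_col_mem.
Qed.
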